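(* Assume Conditions A, B, C with $k=k_1+1>1$ and suppose $N:=\inf_{\lambda\in\mathbb{R}}\min_{|e|=1}H(e,\lambda e\otimes e-I)$ satisfies $-\infty<N<0$. Let $\mu>0$, $R>0$, fix $z\in\mathbb{R}^n$, $r=|x-z|$, $c_k=\left(\frac{k+1}{k-1}\right)^k$, and $E=\frac{R^{k+1}}{c_k\mu^{k-1}(k-1)|N|}$. Then the function $$w(x,t)=\frac{\mu\left[1-(r/R)^{(k+1)/k}\right]^{k/(k-1)}}{(1+t/E)^{1/(k-1)}}$$ is nonnegative, vanishes on $|x-z|=R$, satisfies $w(z,t)=\mu(1+t/E)^{-1/(k-1)}$, and is a viscosity sub-solution of $H(Dw,D^2w)-w_t\ge0$ in $B_R(z)\times(0,T)$ for every $T>0$.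
   Context: $S^{n\times n}$ denotes the real symmetric matrices with the usual order, $I$ the identity, $O$ the zero matrix, $(e\otimes e)_{ij}=e_ie_j$. $H:\mathbb{R}^n\times S^{n\times n}\to\mathbb{R}$ is continuous and satisfies: Condition A: $H(q,X)\le H(q,Y)$ when $X\le Y$ and $H(q,O)=0$. Condition B: there is $k_1\ge0$ with $H(\theta q,X)=|\theta|^{k_1}H(q,X)$ for all $\theta\in\mathbb{R}$ and $H(q,\theta X)=\theta H(q,X)$ for $\theta>0$. Condition C: $\max_{|e|=1}H(e,-I)<0<\min_{|e|=1}H(e,I)$ and $\sup_{\lambda\in\mathbb{R}}\max_{|e|=1}H(e,\lambda e\otimes e+I)<\infty$. $B_R(z)$ is the open ball of radius $R$ about $z$. *)

From mathcomp Require Import all_boot.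
From Stdlib Require Import Reals.
Set Implicit Arguments.
Unset Strict Implicit.
Open Scope R_scope.

Definition Vec (n : nat) := 'I_n -> R.
Definition Mat (n : nat) := 'I_n -> 'I_n -> R.

Definition sumI (n : nat) (f : 'I_n -> R) : R :=
  foldr (fun i acc => f i + acc) 0 (enum 'I_n).

Definition dot n (x y : Vec n) : R := sumI (fun i => x i * y i).
Definition vnorm n (x : Vec n) : R := sqrt (dot x x).
Definition vdist n (x y : Vec n) : R := vnorm (fun i => x i - y i).
Definition mdist n (X Y : Mat n) : R :=
  sqrt (sumI (fun i => sumI (fun j => (X i j - Y i j) * (X i j - Y i j)))).

Definition vscale n (a : R) (x : Vec n) : Vec n := fun i => a * x i.
Definition mscale n (a : R) (X : Mat n) : Mat n := fun i j => a * X i j.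
Definition madd n (X Y : Mat n) : Mat n := fun i j => X i j + Y i j.

Definition ecoord n (i : 'I_n) : Vec n := fun j => if j == i then 1 else 0.
Definition vshift n (x : Vec n) (i : 'I_n) (s : R) : Vec n :=
  fun j => x j + s * ecoord i j.

Definition Imat n : Mat n := fun i j => if i == j then 1 else 0.
Definition Omat n : Mat n := fun _ _ => 0.
Definition tens n (e : Vec n) : Mat n := fun i j => e i * e j.

Definition symmetric n (X : Mat n) : Prop := forall i j, X i j = X j i.
Definition quad n (X : Mat n) (v : Vec n) : R :=
  sumI (fun i => sumI (fun j => v i * X i j * v j)).
Definition mle n (X Y : Mat n) : Prop :=
  forall v : Vec n, 0 <= quad (fun i j => Y i j - X i j) v.

(* real power a^b; for a <= 0 : 0^b = 0 for b <> 0 and a^0 = 1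
   (only a >= 0 is ever used) *)
Definition rpow (a b : R) : R :=
  match Rlt_dec 0 a with
  | left _ => Rpower a b
  | right _ => match Req_EM_T b 0 with left _ => 1 | right _ => 0 end
  end.

Definition H_continuous n (H : Vec n -> Mat n -> R) : Prop :=
  forall q X, symmetric X -> forall eps, 0 < eps -> exists delta, 0 < delta /\
    forall q' X', symmetric X' -> vdist q' q < delta -> mdist X' X < delta ->
      Rabs (H q' X' - H q X) < eps.

Definition conditionA n (H : Vec n -> Mat n -> R) : Prop :=
  (forall q X Y, symmetric X -> symmetric Y -> mle X Y -> H q X <= H q Y) /\
  (forall q, H q (@Omat n) = 0).

Definition conditionB n (H : Vec n -> Mat n -> R) (k1 : R) : Prop :=
  0 <= k1 /\
  (forall theta q X, symmetric X -> H (vscale theta q) X = rpow (Rabs theta) k1 * H q X) /\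
  (forall theta q X, symmetric X -> 0 < theta -> H q (mscale theta X) = theta * H q X).

Definition conditionC n (H : Vec n -> Mat n -> R) : Prop :=
  (exists m, m < 0 /\ forall e : Vec n, vnorm e = 1 -> H e (mscale (-1) (@Imat n)) <= m) /\
  (exists m, 0 < m /\ forall e : Vec n, vnorm e = 1 -> m <= H e (@Imat n)) /\
  (exists M, forall (lam : R) (e : Vec n), vnorm e = 1 ->
       H e (madd (mscale lam (tens e)) (@Imat n)) <= M).

Definition is_N n (H : Vec n -> Mat n -> R) (N : R) : Prop :=
  (forall (lam : R) (e : Vec n), vnorm e = 1 ->
      N <= H e (madd (mscale lam (tens e)) (mscale (-1) (@Imat n)))) /\
  (forall eps, 0 < eps -> exists (lam : R) (e : Vec n), vnorm e = 1 /\
      H e (madd (mscale lam (tens e)) (mscale (-1) (@Imat n))) < N + eps).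

Definition cont_on n (f : Vec n -> R -> R) (Dom : Vec n -> R -> Prop) : Prop :=
  forall x t, Dom x t -> forall eps, 0 < eps -> exists delta, 0 < delta /\
    forall y s, Dom y s -> vdist y x < delta -> Rabs (s - t) < delta ->
      Rabs (f y s - f x t) < eps.

Definition usc_on n (f : Vec n -> R -> R) (Dom : Vec n -> R -> Prop) : Prop :=
  forall x t, Dom x t -> forall eps, 0 < eps -> exists delta, 0 < delta /\
    forall y s, Dom y s -> vdist y x < delta -> Rabs (s - t) < delta ->
      f y s < f x t + eps.

Definition C21_on n (phi : Vec n -> R -> R) (Dphi : Vec n -> R -> Vec n)
    (D2phi : Vec n -> R -> Mat n) (phit : Vec n -> R -> R)
    (Dom : Vec n -> R -> Prop) : Prop :=
  (forall x t, Dom x t -> forall i,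
      derivable_pt_lim (fun s => phi (vshift x i s) t) 0 (Dphi x t i)) /\
  (forall x t, Dom x t -> forall i j,
      derivable_pt_lim (fun s => Dphi (vshift x j s) t i) 0 (D2phi x t i j)) /\
  (forall x t, Dom x t -> derivable_pt_lim (fun s => phi x s) t (phit x t)) /\
  cont_on phi Dom /\
  (forall i, cont_on (fun x t => Dphi x t i) Dom) /\
  (forall i j, cont_on (fun x t => D2phi x t i j) Dom) /\
  cont_on phit Dom.

Definition local_max_on n (f : Vec n -> R -> R) (Dom : Vec n -> R -> Prop)
    (x0 : Vec n) (t0 : R) : Prop :=
  exists delta, 0 < delta /\
    forall x t, Dom x t -> vdist x x0 < delta -> Rabs (t - t0) < delta ->
      f x t <= f x0 t0.

Definition visc_subsolution n (H : Vec n -> Mat n -> R) (u : Vec n -> R -> R)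
    (Dom : Vec n -> R -> Prop) : Prop :=
  usc_on u Dom /\
  forall phi Dphi D2phi phit, C21_on phi Dphi D2phi phit Dom ->
    forall x0 t0, Dom x0 t0 ->
      local_max_on (fun x t => u x t - phi x t) Dom x0 t0 ->
      H (Dphi x0 t0) (D2phi x0 t0) - phit x0 t0 >= 0.

Definition c_k (k : R) : R := rpow ((k + 1) / (k - 1)) k.

Definition E_const (k mu Rad N : R) : R :=
  rpow Rad (k + 1) / (c_k k * rpow mu (k - 1) * (k - 1) * Rabs N).

Definition wfun n (k mu Rad N : R) (z : Vec n) (x : Vec n) (t : R) : R :=
  mu * rpow (1 - rpow (vdist x z / Rad) ((k + 1) / k)) (k / (k - 1))
     / rpow (1 + t / E_const k mu Rad N) (1 / (k - 1)).

(* Write w = mu * profile(|x - z|^2) * decay(t).  At a local maximum (x0, t0) of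
   w - phi, restricting to time and to lines through x0 gives phi_t = w_t,
   Dphi = Dw and D2phi >= D2w.  Away from z, Dw = - |Dw| e with e = (x0 - z) / r,
   r = |x0 - z|, and D2w = |Dw| / r * (lam e(x)e - I) for some lam, so ellipticity
   and the two homogeneities of H give H(Dphi, D2phi) >= |Dw|^k1 * |Dw| / r * N;
   the constants c_k and E are chosen so that the right-hand side is exactly w_t.
   At z the profile has zero gradient but no second derivative, so Dphi = 0 and
   H(Dphi, D2phi) = 0 > w_t. *)

From Pilot Require Import Defs.
From mathcomp Require Import all_boot.
From Stdlib Require Import Reals.
From Coquelicot Require Import Coquelicot.
From Stdlib Require Import Lra Psatz FunctionalExtensionality.
Set Implicit Arguments.
Unset Strict Implicit.
Open Scope R_scope.

Section FiniteSums.
Context {n : nat}.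

Definition sumL (l : seq 'I_n) (f : 'I_n -> R) : R :=
  foldr (fun i acc => f i + acc) 0 l.

Lemma sumI_sumL (f : 'I_n -> R) : sumI f = sumL (enum 'I_n) f.
Proof. by []. Qed.

Lemma sumL_ext l f g : (forall i, f i = g i) -> sumL l f = sumL l g.
Proof. by move=> Hfg; elim: l => //= a l ->; rewrite Hfg. Qed.

Lemma sumL_plus l f g : sumL l (fun i => f i + g i) = sumL l f + sumL l g.
Proof. elim: l => [|a l /= ->] /=; lra. Qed.

Lemma sumL_scal l c f : sumL l (fun i => c * f i) = c * sumL l f.
Proof. elim: l => [|a l /= ->] /=; lra. Qed.

Lemma sumL_minus l f g : sumL l (fun i => f i - g i) = sumL l f - sumL l g.
Proof. elim: l => [|a l /= ->] /=; lra. Qed.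

Lemma sumL_zero l : sumL l (fun _ => 0) = 0.
Proof. elim: l => [|a l /= ->] /=; lra. Qed.

Lemma sumL_le l f g : (forall i, f i <= g i) -> sumL l f <= sumL l g.
Proof. move=> Hfg; elim: l => [|a l IH] /=; [lra | have := Hfg a; lra]. Qed.

Lemma sumL_ge0 l f : (forall i, 0 <= f i) -> 0 <= sumL l f.
Proof. by move=> Hf; rewrite -(sumL_zero l); apply: sumL_le. Qed.

Lemma sumL_single_le l f i : (forall j, 0 <= f j) -> i \in l -> f i <= sumL l f.
Proof.
move=> Hf; elim: l => [|a l IH] //=; rewrite in_cons => /orP [/eqP ->|Hi].
- by have := sumL_ge0 l Hf; lra.
- by have := IH Hi; have := Hf a; lra.
Qed.

Lemma sumL_abs l f : Rabs (sumL l f) <= sumL l (fun i => Rabs (f i)).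
Proof.
elim: l => [|a l IH] /=; first by rewrite Rabs_R0; lra.
by have := Rabs_triang (f a) (sumL l f); lra.
Qed.

Lemma sumI_delta i (f : 'I_n -> R) :
  sumI (fun j => if j == i then f j else 0) = f i.
Proof.
have Hl l : uniq l -> sumL l (fun j => if j == i then f j else 0) = if i \in l then f i else 0.
  elim: l => [|a l IH] //= /andP [Ha /IH ->]; rewrite in_cons.
  by case: (eqVneq a i) Ha => [->|_] /= Ha; [rewrite (negbTE Ha); lra | lra].
by rewrite sumI_sumL Hl ?enum_uniq // mem_enum.
Qed.

Lemma derivable_pt_lim_sumL l (F : 'I_n -> R -> R) (F' : 'I_n -> R) x :
  (forall i, derivable_pt_lim (F i) x (F' i)) ->
  derivable_pt_lim (fun s => sumL l (fun i => F i s)) x (sumL l F').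
Proof.
move=> HF; elim: l => [|a l IH] /=; first exact: derivable_pt_lim_const.
exact: (derivable_pt_lim_plus (F a) (fun s => sumL l (fun i => F i s))).
Qed.

End FiniteSums.

Section Euclidean.
Context {n : nat}.
Implicit Types (x y v a e : Vec n) (X Y : Mat n).

Lemma dot_ge0 x : 0 <= dot x x.
Proof. by apply: sumL_ge0 => i; nra. Qed.

Lemma vnorm_ge0 x : 0 <= vnorm x.
Proof. exact: sqrt_pos. Qed.

Lemma vnorm_sq x : vnorm x * vnorm x = dot x x.
Proof. exact/sqrt_sqrt/dot_ge0. Qed.

Lemma dot_sym x y : dot x y = dot y x.
Proof. by apply: sumL_ext => i; ring. Qed.

Lemma dot_scal_l c x y : dot (fun i => c * x i) y = c * dot x y.
Proof. by rewrite /dot !sumI_sumL -sumL_scal; apply: sumL_ext => i; ring. Qed.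

Lemma dot_ecoord (i : 'I_n) x : dot (ecoord i) x = x i.
Proof.
rewrite -(sumI_delta i x); apply: sumL_ext => j.
by rewrite /ecoord; case: (j == i); ring.
Qed.

Lemma dot_ecoord_r (i : 'I_n) x : dot x (ecoord i) = x i.
Proof. by rewrite dot_sym dot_ecoord. Qed.

Lemma dot_shift a v s :
  dot (fun i => a i + s * v i) (fun i => a i + s * v i)
  = dot a a + 2 * s * dot a v + s * s * dot v v.
Proof.
rewrite /dot !sumI_sumL -(sumL_scal _ (2 * s)) -(sumL_scal _ (s * s)) -!sumL_plus.
by apply: sumL_ext => i; ring.
Qed.

Lemma Rabs_coord_le_vnorm x i : Rabs (x i) <= vnorm x.
Proof.
rewrite -sqrt_Rsqr_abs; apply: sqrt_le_1_alt.
rewrite /Rsqr; apply: (@sumL_single_le _ (enum 'I_n) (fun i => x i * x i)) => [j|];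
  [nra | exact: mem_enum].
Qed.

Lemma vnorm_le x y : (forall j, Rabs (x j) <= Rabs (y j)) -> vnorm x <= vnorm y.
Proof.
move=> Hxy; apply: sqrt_le_1_alt; apply: sumL_le => i.
have := Hxy i; have := Rabs_pos (x i).
have := Rsqr_abs (x i); have := Rsqr_abs (y i); rewrite /Rsqr; nra.
Qed.

Lemma vnorm_scale c v : vnorm (fun i => c * v i) = Rabs c * vnorm v.
Proof.
rewrite /vnorm; have -> : dot (fun i => c * v i) (fun i => c * v i) = (c * c) * dot v v.
  by rewrite /dot !sumI_sumL -sumL_scal; apply: sumL_ext => i; ring.
by rewrite sqrt_mult; [rewrite -sqrt_Rsqr_abs | nra | apply: dot_ge0].
Qed.

Lemma vdist_self x : vdist x x = 0.
Proof.
rewrite /vdist /vnorm /dot sumI_sumL (@sumL_ext _ _ _ (fun _ => 0)) ?sumL_zero ?sqrt_0 //.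
by move=> i; ring.
Qed.

Lemma vdist_le_scale x y v s :
  (forall j, Rabs (x j - y j) <= Rabs s * Rabs (v j)) -> vdist x y <= Rabs s * vnorm v.
Proof. by move=> Hj; rewrite -vnorm_scale; apply: vnorm_le => j; rewrite Rabs_mult. Qed.

Lemma vdist_line y v s : vdist (fun j => y j + s * v j) y = Rabs s * vnorm v.
Proof.
rewrite /vdist -vnorm_scale; congr vnorm.
by apply: functional_extensionality => j; ring.
Qed.

Lemma quad_minus X Y v : quad (fun i j => X i j - Y i j) v = quad X v - quad Y v.
Proof.
rewrite /quad !sumI_sumL -sumL_minus; apply: sumL_ext => i.
by rewrite !sumI_sumL -sumL_minus; apply: sumL_ext => j; ring.
Qed.

Lemma quad_madd X Y v : quad (madd X Y) v = quad X v + quad Y v.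
Proof.
rewrite /quad !sumI_sumL -sumL_plus; apply: sumL_ext => i.
by rewrite !sumI_sumL -sumL_plus; apply: sumL_ext => j; rewrite /madd; ring.
Qed.

Lemma quad_mscale c X v : quad (mscale c X) v = c * quad X v.
Proof.
rewrite /quad !sumI_sumL -sumL_scal; apply: sumL_ext => i.
by rewrite !sumI_sumL -sumL_scal; apply: sumL_ext => j; rewrite /mscale; ring.
Qed.

Lemma quad_tens e v : quad (tens e) v = dot e v * dot e v.
Proof.
rewrite /quad /dot !sumI_sumL -sumL_scal; apply: sumL_ext => i.
by rewrite sumI_sumL Rmult_comm -sumL_scal; apply: sumL_ext => j; rewrite /tens; ring.
Qed.

Lemma quad_Imat v : quad (@Imat n) v = dot v v.
Proof.
apply: sumL_ext => i; transitivity (v i * 1 * v i); last by ring.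
rewrite -(sumI_delta i (fun j => v i * 1 * v j)).
by apply: sumL_ext => j; rewrite /Imat eq_sym; case: (j == i); ring.
Qed.

Lemma sumI_mul_sumI X v : sumI (fun j => v j * sumI (fun i => v i * X j i)) = quad X v.
Proof.
apply: sumL_ext => j; rewrite sumI_sumL -sumL_scal.
by apply: sumL_ext => i; ring.
Qed.

Lemma symmetric_tens e : Defs.symmetric (tens e).
Proof. by move=> i j; rewrite /tens; ring. Qed.

Lemma symmetric_Imat : Defs.symmetric (@Imat n).
Proof. by move=> i j; rewrite /Imat eq_sym. Qed.

Lemma symmetric_madd X Y : Defs.symmetric X -> Defs.symmetric Y -> Defs.symmetric (madd X Y).
Proof. by move=> HX HY i j; rewrite /madd HX HY. Qed.

Lemma symmetric_mscale c X : Defs.symmetric X -> Defs.symmetric (mscale c X).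
Proof. by move=> HX i j; rewrite /mscale HX. Qed.

End Euclidean.

Lemma derivable_pt_lim_shift (g : R -> R) c l :
  derivable_pt_lim (fun h => g (c + h)) 0 l -> derivable_pt_lim g c l.
Proof.
move=> Hg eps Heps; have [de Hde] := Hg eps Heps; exists de => h H1 H2.
by have := Hde h H1 H2; rewrite Rplus_0_l Rplus_0_r.
Qed.

Lemma is_derive_loc (f g : R -> R) x l d : 0 < d ->
  (forall y, Rabs (y - x) < d -> f y = g y) ->
  derivable_pt_lim g x l -> is_derive f x l.
Proof.
move=> Hd Hfg /is_derive_Reals Hg; apply: (is_derive_ext_loc g) => //.
by exists (mkposreal d Hd) => y Hy; symmetry; apply: Hfg.
Qed.

Lemma derivable_pt_lim_loc (f g : R -> R) x l d : 0 < d ->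
  (forall y, Rabs (y - x) < d -> f y = g y) ->
  derivable_pt_lim g x l -> derivable_pt_lim f x l.
Proof. by move=> Hd Hfg Hg; apply is_derive_Reals, (is_derive_loc Hd Hfg Hg). Qed.

Lemma MVT_from_0 (f f' : R -> R) b :
  (forall c, Rabs c <= Rabs b -> derivable_pt_lim f c (f' c)) ->
  exists c, Rabs c <= Rabs b /\ f b - f 0 = f' c * b.
Proof.
move=> Hd; case: (Rtotal_order b 0) => [Hb|[->|Hb]].
- have [c [Hc1 Hc2]] := MVT_cor2 f f' b 0 Hb
    (fun c Hc => Hd c ltac:(rewrite !Rabs_left1; lra)).
  by exists c; split; [rewrite !Rabs_left1; lra | lra].
- by exists 0; split; [lra | ring].
- have [c [Hc1 Hc2]] := MVT_cor2 f f' 0 b Hb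
    (fun c Hc => Hd c ltac:(rewrite !Rabs_pos_eq; lra)).
  by exists c; split; [rewrite !Rabs_pos_eq; lra | lra].
Qed.

Lemma derivable_pt_lim_local_max (h : R -> R) x l d :
  derivable_pt_lim h x l -> 0 < d ->
  (forall s, Rabs (s - x) < d -> h s <= h x) -> l = 0.
Proof.
move=> Hh Hd Hmax; rewrite -(derive_pt_eq_0 h x l (exist _ l Hh) Hh).
apply: (deriv_maximum h (x - d) (x + d)); try lra.
by move=> s H1 H2; apply: Hmax; apply: Rabs_def1; lra.
Qed.

Lemma derivable_pt_lim_local_max_2 (h h' : R -> R) x l d : 0 < d ->
  (forall s, Rabs (s - x) < d -> derivable_pt_lim h s (h' s)) ->
  derivable_pt_lim h' x l ->
  (forall s, Rabs (s - x) < d -> h s <= h x) -> l <= 0.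
Proof.
move=> Hd Hh Hh' Hmax.
have Hx : Rabs (x - x) < d by rewrite Rminus_diag Rabs_R0.
have H0 : h' x = 0 := derivable_pt_lim_local_max (Hh x Hx) Hd Hmax.
apply: Rnot_lt_le => Hl; have [de Hde] := Hh' (l / 2) ltac:(lra).
set m := Rmin d de / 2.
have Hm : 0 < m < d /\ m < de.
  have := Rmin_l d de; have := Rmin_r d de; have := Rmin_pos d de Hd (cond_pos de).
  by rewrite /m; lra.
have Hpos c : x < c <= x + m -> 0 < h' c.
  move=> Hc; have := Hde (c - x) ltac:(lra) ltac:(rewrite Rabs_right; lra).
  rewrite H0 (_ : x + (c - x) = c); last by ring.
  move/Rabs_def2 => Hq; rewrite (_ : h' c = (h' c - 0) / (c - x) * (c - x)).
    by apply: Rmult_lt_0_compat; lra.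
  by field; lra.
have [c [Hmvt Hc]] := MVT_cor2 h h' x (x + m) ltac:(lra)
  (fun c Hc => Hh c ltac:(rewrite Rabs_right; lra)).
have := Hmax (x + m) ltac:(rewrite Rabs_right; lra).
by have := Hpos c ltac:(lra); nra.
Qed.

Lemma local_max_sub_derivatives (W W' g g' : R -> R) W'' g'' d : 0 < d ->
  (forall s, Rabs s < d -> derivable_pt_lim W s (W' s)) ->
  (forall s, Rabs s < d -> derivable_pt_lim g s (g' s)) ->
  derivable_pt_lim W' 0 W'' -> derivable_pt_lim g' 0 g'' ->
  (forall s, Rabs s < d -> W s - g s <= W 0 - g 0) ->
  g' 0 = W' 0 /\ W'' <= g''.
Proof.
move=> Hd HW Hg HW' Hg' Hmax.
have Hh s : Rabs (s - 0) < d ->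
    derivable_pt_lim (fun s => W s - g s) s (W' s - g' s).
  by rewrite Rminus_0_r => Hs; apply: (derivable_pt_lim_minus W g); auto.
have Hmax' s : Rabs (s - 0) < d -> W s - g s <= W 0 - g 0.
  by rewrite Rminus_0_r; apply: Hmax.
have Hs0 : Rabs (0 - 0) < d by rewrite Rminus_0_r Rabs_R0.
split.
- by have := derivable_pt_lim_local_max (Hh 0 Hs0) Hd Hmax'; lra.
- have := derivable_pt_lim_local_max_2 Hd Hh
    (derivable_pt_lim_minus W' g' 0 _ _ HW' Hg') Hmax'; lra.
Qed.

Lemma vshift_vshift n (y : Vec n) i c h : vshift (vshift y i c) i h = vshift y i (c + h).
Proof. by apply: functional_extensionality => j; rewrite /vshift; ring. Qed.

Lemma vshift0 n (y : Vec n) i : vshift y i 0 = y.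
Proof. by apply: functional_extensionality => j; rewrite /vshift; ring. Qed.

Section DirectionalDerivative.
Context {n : nat}.
Variables (f : Vec n -> R) (Df : Vec n -> 'I_n -> R) (x : Vec n) (d0 : R).
Hypothesis d0_gt0 : 0 < d0.
Hypothesis f_partial : forall y, vdist y x < d0 -> forall j,
  derivable_pt_lim (fun s => f (vshift y j s)) 0 (Df y j).
Hypothesis Df_cont : forall j eps, 0 < eps -> exists de, 0 < de /\
  forall y, vdist y x < de -> Rabs (Df y j - Df x j) < eps.

Let vrestr (L : seq 'I_n) (v : Vec n) : Vec n :=
  fun j => if j \in L then v j else 0.

Let f_partial_at y j c : vdist (vshift y j c) x < d0 ->
  derivable_pt_lim (fun s => f (vshift y j s)) c (Df (vshift y j c) j).
Proof.
move=> Hy; apply: derivable_pt_lim_shift.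
rewrite (_ : (fun h => _) = fun h => f (vshift (vshift y j c) j h)); first exact: f_partial.
by apply: functional_extensionality => h; rewrite vshift_vshift.
Qed.

(* Mean value theorem along [e_i], then continuity of [Df _ i] at [x]. *)
Let derivable_pt_lim_vshift_incr (v : Vec n) (L : seq 'I_n) i : i \notin L ->
  derivable_pt_lim
    (fun s => f (vshift (fun j => x j + s * vrestr L v j) i (s * v i))
              - f (fun j => x j + s * vrestr L v j))
    0 (v i * Df x i).
Proof.
move=> HiL eps Heps.
have Hvi := Rabs_pos (v i); have Hv := vnorm_ge0 v.
have [de [Hde HDf]] := @Df_cont i (eps / (Rabs (v i) + 1)) ltac:(apply: Rdiv_lt_0_compat; lra).
set m := Rmin d0 de; have Hm : 0 < m by apply: Rmin_pos.
have Hm0 := Rmin_l d0 de; have Hm1 := Rmin_r d0 de; rewrite -/m in Hm0 Hm1.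
exists (mkposreal _ (Rdiv_lt_0_compat m (vnorm v + 1) Hm ltac:(lra))) => s Hs0 /= Hs.
set y := fun j => x j + s * vrestr L v j.
have Hsm : Rabs s * vnorm v < m.
  have : Rabs s * (vnorm v + 1) < m.
    by apply/(Rmult_lt_reg_r (/ (vnorm v + 1))); [apply: Rinv_0_lt_compat; lra |
      rewrite Rmult_assoc Rinv_r; lra].
  by have := Rabs_pos s; nra.
have Hnear c : Rabs c <= Rabs (s * v i) -> vdist (vshift y i c) x < m.
  move=> Hc; apply: Rle_lt_trans Hsm; apply: vdist_le_scale => j.
  rewrite -Rabs_mult /y /vshift /ecoord /vrestr.
  case: (eqVneq j i) => [->|_]; first by rewrite (negbTE HiL) (_ : _ - _ = c); [|ring].
  case: (j \in L); first by rewrite (_ : _ - _ = s * v j); [lra | ring].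
  by rewrite (_ : _ - _ = 0); [rewrite Rabs_R0; apply: Rabs_pos | ring].
have [c [Hc Hmvt]] := @MVT_from_0 (fun c => f (vshift y i c))
  (fun c => Df (vshift y i c) i) (s * v i)
  (fun c Hc => f_partial_at ltac:(exact: Rlt_le_trans (Hnear c Hc) Hm0)).
rewrite vshift0 in Hmvt.
have -> : f (vshift (fun j => x j + 0 * vrestr L v j) i (0 * v i))
           - f (fun j => x j + 0 * vrestr L v j) = 0.
  by rewrite Rmult_0_l vshift0; ring.
rewrite Rplus_0_l -/y Rminus_0_r Hmvt.
have -> : Df (vshift y i c) i * (s * v i) / s - v i * Df x i
          = v i * (Df (vshift y i c) i - Df x i) by field.
rewrite Rabs_mult.
have := HDf (vshift y i c) (Rlt_le_trans _ _ _ (Hnear c Hc) Hm1).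
have : Rabs (v i) * (eps / (Rabs (v i) + 1)) < eps.
  by apply/(Rmult_lt_reg_r (Rabs (v i) + 1)); [lra | field_simplify; lra].
by have := Rabs_pos (Df (vshift y i c) i - Df x i); nra.
Qed.

Let directional_derivative_restr (v : Vec n) (L : seq 'I_n) : uniq L ->
  derivable_pt_lim (fun s => f (fun j => x j + s * vrestr L v j)) 0
    (sumL L (fun j => v j * Df x j)).
Proof.
elim: L => [|i L IH] /=.
- move=> _; rewrite (_ : (fun s => _) = fun _ => f x); first exact: derivable_pt_lim_const.
  apply: functional_extensionality => s; congr f.
  by apply: functional_extensionality => j; rewrite /vrestr in_nil; ring.
- move=> /andP [HiL HL].
  rewrite (_ : (fun s => _) = fun s =>
      (f (vshift (fun j => x j + s * vrestr L v j) i (s * v i))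
       - f (fun j => x j + s * vrestr L v j)) + f (fun j => x j + s * vrestr L v j)).
    by apply: derivable_pt_lim_plus; [apply: derivable_pt_lim_vshift_incr | apply: IH].
  apply: functional_extensionality => s; rewrite Rplus_comm Rplus_minus; congr f.
  apply: functional_extensionality => j; rewrite /vrestr /vshift /ecoord in_cons.
  by case: (eqVneq j i) => [->|_] /=; [rewrite (negbTE HiL) | ]; ring.
Qed.

Lemma directional_derivative (v : Vec n) :
  derivable_pt_lim (fun s => f (fun j => x j + s * v j)) 0 (sumI (fun j => v j * Df x j)).
Proof.
have := directional_derivative_restr v (enum_uniq 'I_n).
rewrite (_ : vrestr _ v = v) //.
by apply: functional_extensionality => j; rewrite /vrestr mem_enum.
Qed.

End DirectionalDerivative.

Section SymmetryOfSecondPartials.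
Context {n : nat}.
Variables (f : Vec n -> R) (Df : Vec n -> 'I_n -> R) (D2f : Vec n -> 'I_n -> 'I_n -> R)
  (x0 : Vec n) (d0 : R).
Hypothesis d0_gt0 : 0 < d0.
Hypothesis f_partial : forall y, vdist y x0 < d0 -> forall i,
  derivable_pt_lim (fun s => f (vshift y i s)) 0 (Df y i).
Hypothesis Df_partial : forall y, vdist y x0 < d0 -> forall i j,
  derivable_pt_lim (fun s => Df (vshift y j s) i) 0 (D2f y i j).
Hypothesis D2f_cont : forall i j eps, 0 < eps -> exists de, 0 < de /\
  forall y, vdist y x0 < de -> Rabs (D2f y i j - D2f x0 i j) < eps.
Variables (i j : 'I_n).

Let plane (u v : R) : Vec n := fun k => x0 k + u * ecoord i k + v * ecoord j k.
Let F (u v : R) := f (plane u v).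
Let C := vnorm (fun _ : 'I_n => 1) + 1.
Let d1 := d0 / (2 * C).

Let C_gt0 : 0 < C.
Proof. by have := vnorm_ge0 (fun _ : 'I_n => 1); rewrite /C; lra. Qed.

Let d1_gt0 : 0 < d1.
Proof. by apply: Rdiv_lt_0_compat; lra. Qed.

Let plane00 : plane 0 0 = x0.
Proof. by apply: functional_extensionality => k; rewrite /plane; ring. Qed.

Let vdist_plane u v de : Rabs u < de / (2 * C) -> Rabs v < de / (2 * C) ->
  vdist (plane u v) x0 < de.
Proof.
move=> Hu Hv; have Huv : 0 <= Rabs u + Rabs v by have := Rabs_pos u; have := Rabs_pos v; lra.
have Hle : vdist (plane u v) x0 <= (Rabs u + Rabs v) * vnorm (fun _ : 'I_n => 1).
  rewrite -{1}(Rabs_pos_eq _ Huv); apply: vdist_le_scale => k.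
  rewrite /plane /ecoord Rabs_R1 Rmult_1_r (Rabs_pos_eq _ Huv).
  case: (k == i); case: (k == j).
  - by rewrite (_ : _ - _ = u + v); [apply: Rabs_triang | ring].
  - by rewrite (_ : _ - _ = u); [have := Rabs_pos v; lra | ring].
  - by rewrite (_ : _ - _ = v); [have := Rabs_pos u; lra | ring].
  - by rewrite (_ : _ - _ = 0); [rewrite Rabs_R0; lra | ring].
have Hde : (Rabs u + Rabs v) * C < de.
  by apply/(Rmult_lt_reg_r (/ (2 * C))); [apply: Rinv_0_lt_compat; lra |
    rewrite Rmult_assoc; field_simplify; lra].
by have := vnorm_ge0 (fun _ : 'I_n => 1); rewrite /C in Hde; nra.
Qed.

Let plane_in u v : Rabs u < d1 -> Rabs v < d1 -> vdist (plane u v) x0 < d0.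
Proof. exact: vdist_plane. Qed.

Let vshift_plane_j u v h : vshift (plane u v) j h = plane u (v + h).
Proof. by apply: functional_extensionality => k; rewrite /vshift /plane; ring. Qed.

Let vshift_plane_i u v h : vshift (plane u v) i h = plane (u + h) v.
Proof. by apply: functional_extensionality => k; rewrite /vshift /plane; ring. Qed.

Let F_partial_u u v : Rabs u < d1 -> Rabs v < d1 ->
  derivable_pt_lim (fun s => F s v) u (Df (plane u v) i).
Proof.
move=> Hu Hv; apply: derivable_pt_lim_shift; rewrite /F.
under [fun h => _]functional_extensionality => h do rewrite -vshift_plane_i.
exact/f_partial/plane_in.
Qed.

Let F_partial_v u v : Rabs u < d1 -> Rabs v < d1 ->
  derivable_pt_lim (fun s => F u s) v (Df (plane u v) j).
Proof.
move=> Hu Hv; apply: derivable_pt_lim_shift; rewrite /F.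
under [fun h => _]functional_extensionality => h do rewrite -vshift_plane_j.
exact/f_partial/plane_in.
Qed.

Let Df_partial_u u v : Rabs u < d1 -> Rabs v < d1 ->
  derivable_pt_lim (fun s => Df (plane s v) j) u (D2f (plane u v) j i).
Proof.
move=> Hu Hv; apply: derivable_pt_lim_shift.
under [fun h => _]functional_extensionality => h do rewrite -vshift_plane_i.
exact/Df_partial/plane_in.
Qed.

Let Df_partial_v u v : Rabs u < d1 -> Rabs v < d1 ->
  derivable_pt_lim (fun s => Df (plane u s) i) v (D2f (plane u v) i j).
Proof.
move=> Hu Hv; apply: derivable_pt_lim_shift.
under [fun h => _]functional_extensionality => h do rewrite -vshift_plane_j.
exact/Df_partial/plane_in.
Qed.

Let is_derive_uv u v : Rabs u < d1 / 2 -> Rabs v < d1 / 2 ->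
  is_derive (fun s => Derive (fun t => F s t) v) u (D2f (plane u v) j i).
Proof.
move=> Hu Hv; have Hd1 := d1_gt0.
apply: (is_derive_loc (d := d1 / 2)) => [|s Hs|]; [lra | | apply: Df_partial_u; lra].
apply: is_derive_unique; apply/is_derive_Reals/F_partial_v; last lra.
by have := Rabs_triang_inv s u; lra.
Qed.

Let is_derive_vu u v : Rabs u < d1 / 2 -> Rabs v < d1 / 2 ->
  is_derive (fun s => Derive (fun t => F t s) u) v (D2f (plane u v) i j).
Proof.
move=> Hu Hv; have Hd1 := d1_gt0.
apply: (is_derive_loc (d := d1 / 2)) => [|s Hs|]; [lra | | apply: Df_partial_v; lra].
apply: is_derive_unique; apply/is_derive_Reals/F_partial_u; first lra.
by have := Rabs_triang_inv s v; lra.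
Qed.

Let continuity_2d_D2f i' j' (G : R -> R -> R) :
  (forall u v, Rabs u < d1 / 2 -> Rabs v < d1 / 2 -> G u v = D2f (plane u v) i' j') ->
  continuity_2d_pt G 0 0.
Proof.
move=> HG eps; have Hd1 := d1_gt0; have HC := C_gt0.
have [de [Hde HD2f]] := @D2f_cont i' j' eps (cond_pos eps).
have Hp : 0 < Rmin (d1 / 2) (de / (2 * C)).
  by apply: Rmin_pos; [lra | apply: Rdiv_lt_0_compat; lra].
exists (mkposreal _ Hp) => u v /=; rewrite !Rminus_0_r => Hu Hv.
have := Rmin_l (d1 / 2) (de / (2 * C)); have := Rmin_r (d1 / 2) (de / (2 * C)) => H1 H2.
rewrite !HG ?Rabs_R0 ?plane00; try lra.
by apply/HD2f/vdist_plane; lra.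
Qed.

Lemma partial_symmetric : D2f x0 i j = D2f x0 j i.
Proof.
have Hd2 : 0 < d1 / 2 by have := d1_gt0; lra.
have H0 : Rabs 0 < d1 / 2 by rewrite Rabs_R0.
have HS := @Schwarz F 0 0.
rewrite (is_derive_unique _ _ _ (is_derive_uv H0 H0))
  (is_derive_unique _ _ _ (is_derive_vu H0 H0)) plane00 in HS.
symmetry; apply: HS.
- exists (mkposreal _ Hd2) => u v /=; rewrite !Rminus_0_r => Hu Hv.
  split; [|split; [|split]].
  + by exists (Df (plane u v) i); apply/is_derive_Reals/F_partial_u; lra.
  + by exists (Df (plane u v) j); apply/is_derive_Reals/F_partial_v; lra.
  + by exists (D2f (plane u v) j i); apply: is_derive_uv.
  + by exists (D2f (plane u v) i j); apply: is_derive_vu.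
- apply: (continuity_2d_D2f (i' := j) (j' := i)) => u v Hu Hv.
  exact: is_derive_unique (is_derive_uv Hu Hv).
- apply: (continuity_2d_D2f (i' := i) (j' := j)) => u v Hu Hv.
  exact: is_derive_unique (is_derive_vu Hu Hv).
Qed.

End SymmetryOfSecondPartials.

Lemma continuity_pt_of_derivable f x l : derivable_pt_lim f x l -> continuity_pt f x.
Proof. by move=> Hf; apply: derivable_continuous_pt; exists l. Qed.

Lemma rpow_pos x y : 0 < x -> rpow x y = exp (y * ln x).
Proof. by rewrite /rpow; case: Rlt_dec. Qed.

Lemma rpow_nonpos x y : x <= 0 -> y <> 0 -> rpow x y = 0.
Proof. by rewrite /rpow; case: Rlt_dec => [|_ _]; [lra | case: Req_EM_T]. Qed.

Lemma rpow_ge0 x y : 0 <= rpow x y.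
Proof.
rewrite /rpow; case: Rlt_dec => _; first exact/Rlt_le/exp_pos.
by case: Req_EM_T => _; lra.
Qed.

Lemma rpow_gt0 x y : 0 < x -> 0 < rpow x y.
Proof. by move=> Hx; rewrite rpow_pos //; apply: exp_pos. Qed.

Lemma continuity_pt_rpow p y0 : 0 < p -> 0 <= y0 -> continuity_pt (fun y => rpow y p) y0.
Proof.
move=> Hp; case/Rle_lt_or_eq_dec => [Hy0|<-].
- apply: (continuity_pt_ext_loc (fun y => exp (p * ln y))).
    exists (mkposreal _ Hy0) => y Hy.
    by have /Rabs_def2 Hy' : Rabs (y - y0) < y0 := Hy; rewrite rpow_pos //; lra.
  apply: (continuity_pt_of_derivable (l := exp (p * ln y0) * (p * / y0))).
  by apply/is_derive_Reals; auto_derive; [|ring].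
- move=> eps Heps; exists (exp (ln eps / p)); split; first exact: exp_pos.
  move=> y [_]; rewrite /= /R_dist (rpow_nonpos (x := 0)) ?Rminus_0_r; try lra.
  case: (Rle_lt_dec y 0) => Hy.
    by rewrite rpow_nonpos ?Rabs_R0; lra.
  rewrite rpow_pos // !Rabs_pos_eq; try lra; last exact/Rlt_le/exp_pos.
  move=> Hy'; rewrite -(exp_ln eps) //; apply: exp_increasing.
  have : ln y < ln eps / p by rewrite -(ln_exp (ln eps / p)); apply: ln_increasing.
  move/(Rmult_lt_compat_l p) => /(_ Hp); rewrite (_ : p * (ln eps / p) = ln eps) //.
  by field; apply: Rgt_not_eq.
Qed.

Lemma ln_sqrt x : 0 < x -> ln (sqrt x) = ln x / 2.
Proof.
move=> Hx; have Hs := sqrt_lt_R0 x Hx.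
by rewrite -{2}(sqrt_sqrt x) ?ln_mult //; lra.
Qed.

Lemma ln_div x y : 0 < x -> 0 < y -> ln (x / y) = ln x - ln y.
Proof.
move=> Hx Hy; have Hy' := Rinv_0_lt_compat y Hy.
by rewrite /Rdiv ln_mult ?ln_Rinv //; ring.
Qed.

Lemma derivable_pt_lim_rpow_abs p Rad : 1 < p -> 0 < Rad ->
  derivable_pt_lim (fun s => rpow (Rabs s / Rad) p) 0 0.
Proof.
move=> Hp HRad eps Heps; set de := exp ((ln eps + p * ln Rad) / (p - 1)).
exists (mkposreal de (exp_pos _)) => s Hs0 /= Hs.
have Has : 0 < Rabs s by apply: Rabs_pos_lt.
have HRi : 0 < / Rad by apply: Rinv_0_lt_compat.
have -> : Rabs 0 / Rad = 0 by rewrite Rabs_R0; field; lra.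
rewrite Rplus_0_l (@rpow_nonpos 0) ?rpow_pos; try lra; last exact: Rdiv_lt_0_compat.
rewrite !Rminus_0_r /Rdiv Rabs_mult Rabs_inv Rabs_pos_eq; last exact/Rlt_le/exp_pos.
rewrite ln_mult // ln_Rinv // -[X in _ * / X](exp_ln (Rabs s)) //.
rewrite -exp_Ropp -exp_plus -(exp_ln eps) //; apply: exp_increasing.
have : ln (Rabs s) < (ln eps + p * ln Rad) * / (p - 1).
  by rewrite -(ln_exp (_ * _)); apply: ln_increasing.
move/(Rmult_lt_compat_l (p - 1)) => /(_ ltac:(lra)).
by rewrite (_ : _ * (_ * _) = ln eps + p * ln Rad); [nra | field; lra].
Qed.

Section RadialProfile.
Variables (k Rad : R).
Hypothesis k_gt1 : 1 < k.
Hypothesis Rad_gt0 : 0 < Rad.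

Definition profile (Q : R) := rpow (1 - rpow (sqrt Q / Rad) ((k + 1) / k)) (k / (k - 1)).

(* exp-ln forms of [(sqrt Q / Rad)^((k+1)/k)] and of [profile], valid for [0 < Q < Rad^2] *)
Definition ratio_pow (Q : R) := exp ((k + 1) / k / 2 * ln Q - (k + 1) / k * ln Rad).
Definition profile_smooth (Q : R) := exp (k / (k - 1) * ln (1 - ratio_pow Q)).
Definition profile_smooth' (Q : R) :=
  profile_smooth Q * (k / (k - 1) * (/ (1 - ratio_pow Q) * - (ratio_pow Q * ((k + 1) / k / 2 / Q)))).

Let exponents_pos : 0 < (k + 1) / k /\ 0 < k / (k - 1).
Proof. by split; apply: Rdiv_lt_0_compat; lra. Qed.

Lemma ratio_pow_lt1 Q : 0 < Q -> Q < Rad * Rad -> ratio_pow Q < 1.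
Proof.
move=> HQ HQR; rewrite -exp_0; apply: exp_increasing.
have : ln Q < ln (Rad * Rad) by apply: ln_increasing.
by rewrite ln_mult //; have [? ?] := exponents_pos; nra.
Qed.

Lemma profile_smooth_eq Q : 0 < Q -> Q < Rad * Rad -> profile Q = profile_smooth Q.
Proof.
move=> HQ HQR; have Hs := sqrt_lt_R0 Q HQ; rewrite /profile.
have -> : rpow (sqrt Q / Rad) ((k + 1) / k) = ratio_pow Q.
  rewrite rpow_pos; last exact: Rdiv_lt_0_compat.
  by rewrite /ratio_pow ln_div // ln_sqrt //; congr exp; field; lra.
by rewrite rpow_pos //; have := ratio_pow_lt1 HQ HQR; lra.
Qed.

Lemma rpow_ratio_lt1 Q : 0 <= Q -> Q < Rad * Rad -> rpow (sqrt Q / Rad) ((k + 1) / k) < 1.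
Proof.
move=> HQ HQR; case/Rle_lt_or_eq_dec: HQ => [HQ|<-].
- have Hs := sqrt_lt_R0 Q HQ; rewrite rpow_pos; last exact: Rdiv_lt_0_compat.
  rewrite -[X in _ < X]exp_0; apply: exp_increasing.
  have : sqrt Q < Rad by rewrite -(sqrt_square Rad); [apply: sqrt_lt_1; nra | lra].
  move=> HsR; have : ln (sqrt Q / Rad) < 0.
    rewrite -ln_1; apply: ln_increasing; first exact: Rdiv_lt_0_compat.
    by apply/(Rmult_lt_reg_r Rad) => //; field_simplify; lra.
  by have [? ?] := exponents_pos; nra.
- have -> : sqrt 0 / Rad = 0 by rewrite sqrt_0; field; lra.
  by have [? ?] := exponents_pos; rewrite rpow_nonpos; lra.
Qed.

Lemma profile0 : profile 0 = 1.
Proof.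
have [? ?] := exponents_pos; rewrite /profile.
have -> : sqrt 0 / Rad = 0 by rewrite sqrt_0; field; lra.
by rewrite (@rpow_nonpos 0) ?Rminus_0_r ?rpow_pos ?ln_1 ?Rmult_0_r ?exp_0; lra.
Qed.

Lemma profile_boundary Q : sqrt Q = Rad -> profile Q = 0.
Proof.
move=> HQ; have [? ?] := exponents_pos.
rewrite /profile HQ (_ : Rad / Rad = 1); last by field; lra.
rewrite (@rpow_pos 1) ?ln_1 ?Rmult_0_r ?exp_0 ?Rminus_diag ?rpow_nonpos; lra.
Qed.

Lemma continuity_pt_profile Q0 : 0 <= Q0 -> Q0 < Rad * Rad -> continuity_pt profile Q0.
Proof.
move=> HQ HQR; have [Hp Hq] := exponents_pos.
have Hratio := rpow_ratio_lt1 HQ HQR.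
apply: (continuity_pt_comp (fun Q => rpow (sqrt Q / Rad) ((k + 1) / k))
  (fun y => rpow (1 - y) (k / (k - 1)))).
- apply: (continuity_pt_comp (fun Q => sqrt Q / Rad) (fun y => rpow y ((k + 1) / k))).
  + apply: (continuity_pt_comp sqrt (fun y => y / Rad)); first exact: continuity_pt_sqrt.
    apply: (continuity_pt_of_derivable (l := / Rad)).
    by apply/is_derive_Reals; auto_derive; [|field]; lra.
  + by apply: continuity_pt_rpow => //; apply: Rdiv_le_0_compat; [apply: sqrt_pos | lra].
- apply: (continuity_pt_ext_loc (fun y => exp (k / (k - 1) * ln (1 - y)))).
    exists (mkposreal (1 - rpow (sqrt Q0 / Rad) ((k + 1) / k)) ltac:(simpl; lra)).
    move=> y Hy; have /Rabs_def2 Hy' : Rabs (y - rpow (sqrt Q0 / Rad) ((k + 1) / k))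
      < 1 - rpow (sqrt Q0 / Rad) ((k + 1) / k) := Hy.
    by rewrite rpow_pos //; lra.
  apply: continuity_pt_of_derivable.
  by apply/is_derive_Reals; auto_derive; [lra | reflexivity].
Qed.

Lemma derivable_pt_lim_profile_smooth Q : 0 < Q -> Q < Rad * Rad ->
  derivable_pt_lim profile_smooth Q (profile_smooth' Q).
Proof.
move=> HQ HQR; have := ratio_pow_lt1 HQ HQR.
rewrite /profile_smooth' /profile_smooth /ratio_pow /Rminus => Hu.
by apply/is_derive_Reals; auto_derive; [repeat split; lra | field; lra].
Qed.

Lemma ex_derivable_pt_lim_profile_smooth' Q : 0 < Q -> Q < Rad * Rad ->
  exists l, derivable_pt_lim profile_smooth' Q l.
Proof.
move=> HQ HQR; have := ratio_pow_lt1 HQ HQR.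
rewrite /ratio_pow /Rminus => Hu.
have [l Hl] : ex_derive profile_smooth' Q.
  by rewrite /profile_smooth' /profile_smooth /ratio_pow /Rminus; auto_derive; repeat split; lra.
by exists l; apply/is_derive_Reals.
Qed.

Lemma profile_smooth'_lt0 Q : 0 < Q -> Q < Rad * Rad -> profile_smooth' Q < 0.
Proof.
move=> HQ HQR; have [Hp Hq] := exponents_pos; have Hu1 := ratio_pow_lt1 HQ HQR.
have Hu0 : 0 < ratio_pow Q by apply: exp_pos.
have Hc : 0 < (k + 1) / k / 2 / Q by apply: Rdiv_lt_0_compat; lra.
have Hd : 0 < / (1 - ratio_pow Q) by apply: Rinv_0_lt_compat; lra.
have : 0 < k / (k - 1) * (/ (1 - ratio_pow Q) * (ratio_pow Q * ((k + 1) / k / 2 / Q))).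
  by apply: Rmult_lt_0_compat => //; apply: Rmult_lt_0_compat => //; apply: Rmult_lt_0_compat.
by have := exp_pos (k / (k - 1) * ln (1 - ratio_pow Q)); rewrite /profile_smooth' /profile_smooth; nra.
Qed.

Lemma ln_opp_profile_smooth' Q : 0 < Q -> Q < Rad * Rad ->
  ln (- profile_smooth' Q) = (k / (k - 1) - 1) * ln (1 - ratio_pow Q) + ln (k / (k - 1))
    + ln ((k + 1) / k / 2) + ((k + 1) / k / 2 - 1) * ln Q - (k + 1) / k * ln Rad.
Proof.
move=> HQ HQR; have [Hp Hq] := exponents_pos; have Hu1 := ratio_pow_lt1 HQ HQR.
have Hp2 : 0 < (k + 1) / k / 2 by lra.
have -> : - profile_smooth' Q = exp (k / (k - 1) * ln (1 - ratio_pow Q) + ln (k / (k - 1))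
    + ln (ratio_pow Q) + ln ((k + 1) / k / 2) + - ln (1 - ratio_pow Q) + - ln Q).
  rewrite !exp_plus !exp_Ropp !exp_ln //; try lra; last exact: exp_pos.
  by rewrite /profile_smooth' /profile_smooth; field; lra.
by rewrite ln_exp /ratio_pow ln_exp; ring.
Qed.

Lemma derivable_pt_lim_profile_sq : derivable_pt_lim (fun s => profile (s * s)) 0 0.
Proof.
have [Hp Hq] := exponents_pos.
have Hp1 : 1 < (k + 1) / k by apply/(Rmult_lt_reg_r k); [lra | field_simplify; lra].
have Hratio := derivable_pt_lim_rpow_abs Hp1 Rad_gt0.
have -> : (fun s => profile (s * s))
    = fun s => rpow (1 - rpow (Rabs s / Rad) ((k + 1) / k)) (k / (k - 1)).
  by apply: functional_extensionality => s; rewrite /profile -sqrt_Rsqr_abs.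
rewrite -[X in derivable_pt_lim _ _ X](Rmult_0_r (- (k / (k - 1)))).
apply: (derivable_pt_lim_comp (fun s => rpow (Rabs s / Rad) ((k + 1) / k))
  (fun y => rpow (1 - y) (k / (k - 1)))) => //.
have -> : Rabs 0 / Rad = 0 by rewrite Rabs_R0; field; lra.
rewrite (@rpow_nonpos 0); try lra.
apply: (derivable_pt_lim_loc (g := fun y => exp (k / (k - 1) * ln (1 - y))) (d := 1)); first lra.
  by move=> y /Rabs_def2 Hy; rewrite rpow_pos; lra.
apply/is_derive_Reals; auto_derive; first lra.
by rewrite Ropp_0 Rplus_0_r ln_1 Rmult_0_r exp_0; field; lra.
Qed.

End RadialProfile.

Definition sqdist n (x z : Vec n) : R := dot (fun i => x i - z i) (fun i => x i - z i).

Section Ball.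
Context {n : nat}.
Variable z : Vec n.
Implicit Types x y v : Vec n.

Lemma sqdist_ge0 x : 0 <= sqdist x z.
Proof. exact: dot_ge0. Qed.

Lemma sqdist_self : sqdist z z = 0.
Proof. by rewrite /sqdist /dot sumI_sumL (@sumL_ext _ _ _ (fun _ => 0)) ?sumL_zero // => i; ring. Qed.

Lemma sqdist_line y v s :
  sqdist (fun j => y j + s * v j) z
  = sqdist y z + 2 * s * dot (fun i => y i - z i) v + s * s * dot v v.
Proof.
rewrite /sqdist -dot_shift; congr dot; apply: functional_extensionality => j; ring.
Qed.

Lemma sqdist_eq0 x : sqdist x z = 0 -> x = z.
Proof.
move=> Hx; apply: functional_extensionality => i.
have := Rabs_coord_le_vnorm (fun i => x i - z i) i.
rewrite /vnorm -/(sqdist x z) Hx sqrt_0 => Hi.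
have /Rabs_eq_0 : Rabs (x i - z i) = 0 by have := Rabs_pos (x i - z i); lra.
lra.
Qed.

Lemma sqdist_diff x y :
  Rabs (sqdist y z - sqdist x z)
  <= 2 * sumI (fun i => Rabs (x i - z i)) * vdist y x + vdist y x * vdist y x.
Proof.
set a := fun i => x i - z i; set d := fun i => y i - x i.
have -> : sqdist y z = dot (fun i => a i + 1 * d i) (fun i => a i + 1 * d i).
  by congr dot; apply: functional_extensionality => i; rewrite /a /d; ring.
rewrite dot_shift /vdist -/d vnorm_sq -/(sqdist x z).
have -> : sqdist x z + 2 * 1 * dot a d + 1 * 1 * dot d d - sqdist x z = 2 * dot a d + dot d d.
  by rewrite /sqdist -/a; ring.
apply: Rle_trans (Rabs_triang _ _) _; rewrite (Rabs_pos_eq (dot d d)); last exact: dot_ge0.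
apply: Rplus_le_compat_r; rewrite Rabs_mult Rabs_pos_eq ?Rmult_assoc; last lra.
apply: Rmult_le_compat_l; first lra.
rewrite /dot !sumI_sumL; apply: Rle_trans (sumL_abs _ _) _.
rewrite Rmult_comm -sumL_scal; apply: sumL_le => i.
rewrite Rabs_mult Rmult_comm; apply: Rmult_le_compat_r; first exact: Rabs_pos.
exact: Rabs_coord_le_vnorm.
Qed.

Lemma sqdist_near x eps : 0 < eps -> exists de, 0 < de /\
  forall y, vdist y x < de -> Rabs (sqdist y z - sqdist x z) < eps.
Proof.
move=> Heps; set S := sumI (fun i => Rabs (x i - z i)).
have HS : 0 <= S by apply: sumL_ge0 => i; apply: Rabs_pos.
have Hde : 0 < eps / (2 * S + 1) by apply: Rdiv_lt_0_compat; lra.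
exists (Rmin 1 (eps / (2 * S + 1))); split; first by apply: Rmin_pos; lra.
move=> y Hy; have H1 := Rmin_l 1 (eps / (2 * S + 1)); have H2 := Rmin_r 1 (eps / (2 * S + 1)).
have Hd := vnorm_ge0 (fun i => y i - x i); rewrite -/(vdist y x) in Hd.
apply: Rle_lt_trans (sqdist_diff x y) _; rewrite -/S.
have : (2 * S + 1) * vdist y x < eps.
  have : vdist y x < eps / (2 * S + 1) by lra.
  move/(Rmult_lt_compat_l (2 * S + 1)) => /(_ ltac:(lra)).
  by rewrite (_ : _ * (_ / _) = eps) //; field; lra.
by nra.
Qed.

Lemma vdist_lt_iff x Rad : 0 < Rad -> vdist x z < Rad <-> sqdist x z < Rad * Rad.
Proof.
move=> HRad; have HQ := sqdist_ge0 x; rewrite /vdist /vnorm -/(sqdist x z); split => Hx.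
- by rewrite -(sqrt_sqrt (sqdist x z)) //; have := sqrt_pos (sqdist x z); nra.
- by rewrite -(sqrt_square Rad); [apply: sqrt_lt_1; nra | lra].
Qed.

Lemma ball_open x Rad : 0 < Rad -> vdist x z < Rad ->
  exists de, 0 < de /\ forall y, vdist y x < de -> vdist y z < Rad.
Proof.
move=> HRad /(vdist_lt_iff x HRad) Hx.
have [de [Hde Hnear]] := @sqdist_near x (Rad * Rad - sqdist x z) ltac:(lra).
exists de; split => // y /Hnear /Rabs_def2 Hy.
by apply/(vdist_lt_iff y HRad); lra.
Qed.

End Ball.

Section TimeDecay.
Variables (k mu Rad N : R).
Hypothesis k_gt1 : 1 < k.
Hypothesis mu_gt0 : 0 < mu.
Hypothesis Rad_gt0 : 0 < Rad.
Hypothesis N_lt0 : N < 0.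

Local Notation E := (E_const k mu Rad N).

Lemma E_const_gt0 : 0 < E.
Proof.
apply: Rdiv_lt_0_compat; first exact: rpow_gt0.
repeat apply: Rmult_lt_0_compat; try apply: rpow_gt0; try lra.
- by apply: Rdiv_lt_0_compat; lra.
- by apply: Rabs_pos_lt; lra.
Qed.

Definition decay (t : R) := exp (- (1 / (k - 1)) * ln (1 + t / E_const k mu Rad N)).
Definition decay' (t : R) :=
  decay t * (- (1 / (k - 1)) * (/ (1 + t / E_const k mu Rad N) * / E_const k mu Rad N)).

Let shift_gt0 t : 0 <= t -> 0 < 1 + t / E.
Proof.
move=> Ht; have HE := E_const_gt0.
have : 0 <= t / E by apply: Rdiv_le_0_compat; lra.
lra.
Qed.

Lemma derivable_pt_lim_decay t : 0 <= t -> derivable_pt_lim decay t (decay' t).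
Proof.
move=> /shift_gt0 Ht; have HE := E_const_gt0.
apply/is_derive_Reals; rewrite /decay' /decay /Rdiv in Ht *.
by auto_derive; [lra | ring].
Qed.

Lemma decay'_lt0 t : 0 <= t -> decay' t < 0.
Proof.
move=> /shift_gt0 Ht; have HE := E_const_gt0.
have HE' := Rinv_0_lt_compat _ HE; have Ht' := Rinv_0_lt_compat _ Ht.
have Hk : 0 < 1 / (k - 1) by apply: Rdiv_lt_0_compat; lra.
have : 0 < 1 / (k - 1) * (/ (1 + t / E) * / E) by apply: Rmult_lt_0_compat => //; nra.
by have := exp_pos (- (1 / (k - 1)) * ln (1 + t / E)); rewrite /decay' /decay; nra.
Qed.

Lemma decay_rpow t : 0 <= t -> decay t = rpow (1 + t / E) (- (1 / (k - 1))).
Proof. by move=> /shift_gt0 Ht; rewrite rpow_pos. Qed.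

Lemma wfun_eq n (z x : Vec n) t : 0 <= t ->
  wfun k mu Rad N z x t = mu * profile k Rad (sqdist x z) * decay t.
Proof.
move=> /shift_gt0 Ht; rewrite /wfun (rpow_pos (x := 1 + t / E)) //.
by rewrite /decay /profile /vdist /vnorm /sqdist -Ropp_mult_distr_l exp_Ropp.
Qed.

Lemma wfun_center n (z : Vec n) t : 0 <= t -> wfun k mu Rad N z z t = mu * decay t.
Proof.
by move=> Ht; rewrite wfun_eq // sqdist_self profile0 //; ring.
Qed.

Lemma ln_E_const : ln E = (k + 1) * ln Rad
  - (k * ln ((k + 1) / (k - 1)) + (k - 1) * ln mu + ln (k - 1) + ln (Rabs N)).
Proof.
have HN : 0 < Rabs N by apply: Rabs_pos_lt; lra.
have HK : 0 < (k + 1) / (k - 1) by apply: Rdiv_lt_0_compat; lra.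
rewrite -[X in _ = X]ln_exp; congr ln.
rewrite /Rminus exp_plus exp_Ropp !exp_plus !exp_ln; try lra.
by rewrite /E_const /c_k !rpow_pos //; field; repeat split; lra.
Qed.

Let ln_ratio_split : ln ((k + 1) / (k - 1)) = ln 2 + ln (k / (k - 1)) + ln ((k + 1) / k / 2).
Proof.
have Hq : 0 < k / (k - 1) by apply: Rdiv_lt_0_compat; lra.
have Hp : 0 < (k + 1) / k / 2 by apply: Rdiv_lt_0_compat; [apply: Rdiv_lt_0_compat|]; lra.
by rewrite -!ln_mult //; try lra; congr ln; field; lra.
Qed.

(* [F * sqrt A = |Dw|] at [|x - z|^2 = A]: the left side is [|Dw|^(k-1) * |Dw| / r * N],
   the right side is [w_t]. *)
Lemma decay_profile_identity A t : 0 < A -> A < Rad * Rad -> 0 <= t ->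
  let F := - 2 * (mu * decay t) * profile_smooth' k Rad A in
  rpow (F * sqrt A) (k - 1) * F * N = mu * profile_smooth k Rad A * decay' t.
Proof.
move=> HA HAR Ht F; have HE := E_const_gt0; have /shift_gt0 Hg := Ht.
have HP1 := profile_smooth'_lt0 k_gt1 Rad_gt0 HA HAR.
have Hsq := sqrt_lt_R0 A HA; have Hdecay : 0 < decay t by apply: exp_pos.
have Hmd : 0 < mu * decay t by apply: Rmult_lt_0_compat.
have HF : 0 < F by rewrite /F; nra.
have HlnF : ln F = ln 2 + ln mu - ln (1 + t / E) / (k - 1) + ln (- profile_smooth' k Rad A).
  rewrite /F (_ : -2 * (mu * decay t) * _ = 2 * (mu * decay t) * - profile_smooth' k Rad A);
    last by ring.
  by rewrite !ln_mult ?ln_exp; try lra; nra.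
have HN : N = - exp (ln (Rabs N)).
  by rewrite exp_ln; [rewrite Rabs_left; lra | apply: Rabs_pos_lt; lra].
have -> : rpow (F * sqrt A) (k - 1) * F * N
          = - exp (k * ln F + (k - 1) * ln A / 2 + ln (Rabs N)).
  rewrite rpow_pos; last exact: Rmult_lt_0_compat.
  rewrite ln_mult // ln_sqrt // {1}HN -{2}(exp_ln F) // -exp_plus -Ropp_mult_distr_r -exp_plus.
  by do 2 f_equal; lra.
have -> : mu * profile_smooth k Rad A * decay' t = - exp (ln mu
    + k / (k - 1) * ln (1 - ratio_pow k Rad A) + - (k / (k - 1) * ln (1 + t / E))
    + - ln (k - 1) + - ln E).
  have Hexp : exp (k / (k - 1) * ln (1 + t / E))
      = exp (ln (1 + t / E) / (k - 1)) * (1 + t / E).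
    by rewrite -{3}(exp_ln (1 + t / E)) // -exp_plus; f_equal; field; lra.
  rewrite !exp_plus !exp_Ropp !exp_ln ?Hexp; try lra.
  rewrite /decay' /decay /profile_smooth.
  rewrite (_ : - (1 / (k - 1)) * ln (1 + t / E) = - (ln (1 + t / E) / (k - 1))); last by field; lra.
  rewrite exp_Ropp.
  by field; repeat split; try apply: Rgt_not_eq; try apply: exp_pos; lra.
do 2 f_equal; rewrite HlnF ln_opp_profile_smooth' // ln_E_const ln_ratio_split.
by field; lra.
Qed.

End TimeDecay.


Lemma usc_wfun n k mu Rad N (z : Vec n) T :
  1 < k -> 0 < mu -> 0 < Rad -> N < 0 ->
  usc_on (wfun k mu Rad N z) (fun x t => vdist x z < Rad /\ 0 < t /\ t < T).
Proof.
move=> Hk Hmu HRad HN x t [Hx [Ht _]] eps Heps.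
have Hcont : continuity_2d_pt (fun Q s => mu * profile k Rad Q * decay k mu Rad N s)
               (sqdist x z) t.
  apply: continuity_2d_pt_mult; first apply: continuity_2d_pt_mult.
  - exact: continuity_2d_pt_const.
  - apply: (continuity_1d_2d_pt_comp (profile k Rad) (fun Q _ => Q)).
      by apply: continuity_pt_profile => //; [apply: sqdist_ge0 | apply/vdist_lt_iff].
    exact: continuity_2d_pt_id1.
  - apply: (continuity_1d_2d_pt_comp (decay k mu Rad N) (fun _ s => s)).
      apply: continuity_pt_of_derivable; apply: derivable_pt_lim_decay => //; lra.
    exact: continuity_2d_pt_id2.
have [de Hde] := Hcont (mkposreal eps Heps).
have [dQ [HdQ HQ]] := @sqdist_near _ z x _ (cond_pos de).
exists (Rmin dQ de); split; first by apply: Rmin_pos => //; apply: cond_pos.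
move=> y s [_ [Hs _]] Hy Hst; have := Rmin_l dQ de; have := Rmin_r dQ de => H1 H2.
rewrite !wfun_eq; try lra.
have := Hde (sqdist y z) s (HQ y ltac:(lra)) ltac:(lra).
by rewrite /= => /Rabs_def2; lra.
Qed.

Lemma continuity_pt_near (f : R -> R) x eps : continuity_pt f x -> 0 < eps ->
  exists d, 0 < d /\ forall y, Rabs (y - x) < d -> Rabs (f y - f x) < eps.
Proof.
move=> /continuity_pt_locally Hf Heps; have [d Hd] := Hf (mkposreal eps Heps).
by exists d; split => [|y Hy]; [apply: cond_pos | apply: Hd].
Qed.

Section TestFunction.
Context {n : nat}.
Variables (H : Vec n -> Mat n -> R) (k1 N mu Rad T : R) (z : Vec n).
Hypothesis HA : conditionA H.
Hypothesis HB : conditionB H k1.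
Hypothesis k1_gt0 : 0 < k1.
Hypothesis HN : is_N H N.
Hypothesis N_lt0 : N < 0.
Hypothesis mu_gt0 : 0 < mu.
Hypothesis Rad_gt0 : 0 < Rad.

Local Notation k := (k1 + 1).
Local Notation w := (wfun k mu Rad N z).
Local Notation Dom := (fun (x : Vec n) (t : R) => vdist x z < Rad /\ 0 < t /\ t < T).
Local Notation line x v s := (fun j => x j + s * v j).

Variables (phi : Vec n -> R -> R) (Dphi : Vec n -> R -> Vec n) (D2phi : Vec n -> R -> Mat n)
  (phit : Vec n -> R -> R).
Hypothesis Hphi : C21_on phi Dphi D2phi phit Dom.
Variables (x0 : Vec n) (t0 : R).
Hypothesis Hx0 : Dom x0 t0.
Hypothesis Hmax : local_max_on (fun x t => w x t - phi x t) Dom x0 t0.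

Let k_gt1 : 1 < k.
Proof. lra. Qed.

Let t0_gt0 : 0 < t0.
Proof. by case: Hx0 => _ []. Qed.

Let slice_open y : Dom y t0 -> exists de, 0 < de /\ forall y', vdist y' y < de -> Dom y' t0.
Proof.
case=> Hy Ht; have [de [Hde Hball]] := ball_open Rad_gt0 Hy.
by exists de; split => // y' /Hball.
Qed.

Let slice_cont (f : Vec n -> R -> R) y : cont_on f Dom -> Dom y t0 ->
  forall eps, 0 < eps -> exists de, 0 < de /\
    forall y', vdist y' y < de -> Rabs (f y' t0 - f y t0) < eps.
Proof.
move=> Hf Hy eps Heps; have [d1 [Hd1 Hf1]] := Hf y t0 Hy eps Heps.
have [d2 [Hd2 Hy2]] := slice_open Hy.
exists (Rmin d1 d2); split; first exact: Rmin_pos.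
move=> y' Hy'; have := Rmin_l d1 d2; have := Rmin_r d1 d2 => H1 H2.
by apply: Hf1; [apply: Hy2 | | rewrite Rminus_diag Rabs_R0]; lra.
Qed.

Lemma D2phi_symmetric : Defs.symmetric (D2phi x0 t0).
Proof.
have [Hphi1 [HDphi1 [_ [_ [_ [HD2cont _]]]]]] := Hphi.
have [d0 [Hd0 Hball]] := slice_open Hx0.
move=> i j; symmetry.
apply: (partial_symmetric (f := fun y => phi y t0) (Df := fun y i => Dphi y t0 i)
  (D2f := fun y i j => D2phi y t0 i j) Hd0) => [y Hy i'|y Hy i' j'|i' j' eps Heps].
- exact/Hphi1/Hball.
- exact/HDphi1/Hball.
- exact: (slice_cont (f := fun y t => D2phi y t i' j')).
Qed.

Let phi_line y v : Dom y t0 ->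
  derivable_pt_lim (fun s => phi (line y v s) t0) 0 (sumI (fun j => v j * Dphi y t0 j)).
Proof.
move=> Hy; have [Hphi1 [_ [_ [_ [HDcont _]]]]] := Hphi.
have [d0 [Hd0 Hball]] := slice_open Hy.
apply: (directional_derivative (f := fun y => phi y t0) (Df := fun y j => Dphi y t0 j) Hd0)
  => [y' Hy' j|j eps Heps].
- exact/Hphi1/Hball.
- exact: (slice_cont (f := fun y t => Dphi y t j)).
Qed.

Let Dphi_line y v i : Dom y t0 ->
  derivable_pt_lim (fun s => Dphi (line y v s) t0 i) 0 (sumI (fun j => v j * D2phi y t0 i j)).
Proof.
move=> Hy; have [_ [HDphi1 [_ [_ [_ [HD2cont _]]]]]] := Hphi.
have [d0 [Hd0 Hball]] := slice_open Hy.
apply: (directional_derivative (f := fun y => Dphi y t0 i) (Df := fun y j => D2phi y t0 i j) Hd0)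
  => [y' Hy' j|j eps Heps].
- exact/HDphi1/Hball.
- exact: (slice_cont (f := fun y t => D2phi y t i j)).
Qed.

Let line_in_slice v : exists d, 0 < d /\ forall s, Rabs s < d ->
  Dom (line x0 v s) t0 /\ w (line x0 v s) t0 - phi (line x0 v s) t0 <= w x0 t0 - phi x0 t0.
Proof.
have [dm [Hdm Hm]] := Hmax; have [db [Hdb Hb]] := slice_open Hx0.
have Hd : 0 < Rmin dm db by apply: Rmin_pos.
have Hv := vnorm_ge0 v.
exists (Rmin dm db / (vnorm v + 1)); split; first by apply: Rdiv_lt_0_compat; lra.
move=> s Hs; have Hls : vdist (line x0 v s) x0 < Rmin dm db.
  rewrite vdist_line; apply: Rle_lt_trans (_ : Rabs s * (vnorm v + 1) < _).
    by have := Rabs_pos s; nra.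
  by apply/(Rmult_lt_reg_r (/ (vnorm v + 1))); [apply: Rinv_0_lt_compat; lra |
    rewrite Rmult_assoc Rinv_r; lra].
have := Rmin_l dm db; have := Rmin_r dm db => H1 H2.
have HD : Dom (line x0 v s) t0 by apply: Hb; lra.
by split => //; apply: Hm => //; [lra | rewrite Rminus_diag Rabs_R0].
Qed.

Let phi_line_at v s : Dom (line x0 v s) t0 ->
  derivable_pt_lim (fun s => phi (line x0 v s) t0) s
    (sumI (fun j => v j * Dphi (line x0 v s) t0 j)).
Proof.
move=> /(phi_line v) Hd; apply: derivable_pt_lim_shift.
rewrite (_ : (fun h => _) = fun h => phi (line (line x0 v s) v h) t0) //.
by apply: functional_extensionality => h; congr phi; apply: functional_extensionality => j; ring.
Qed.

Let phi_line_second v :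
  derivable_pt_lim (fun s => sumI (fun j => v j * Dphi (line x0 v s) t0 j)) 0
    (quad (D2phi x0 t0) v).
Proof.
rewrite -sumI_mul_sumI; apply: derivable_pt_lim_sumL => j.
exact/(derivable_pt_lim_scal (fun s => Dphi (line x0 v s) t0 j))/Dphi_line.
Qed.

Let line0 v : line x0 v 0 = x0.
Proof. by apply: functional_extensionality => j; ring. Qed.

Lemma line_touching_first (W : R -> R) v l d : 0 < d ->
  (forall s, Rabs s < d -> W s = w (line x0 v s) t0) ->
  derivable_pt_lim W 0 l -> sumI (fun j => v j * Dphi x0 t0 j) = l.
Proof.
move=> Hd HW HWd; have [d' [Hd' Hline]] := line_in_slice v.
have Hdd : 0 < Rmin d d' by apply: Rmin_pos.
have := Rmin_l d d'; have := Rmin_r d d' => H1 H2.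
have Hphi0 := phi_line_at (s := 0) (v := v); rewrite line0 in Hphi0.
have := @derivable_pt_lim_local_max (fun s => W s - phi (line x0 v s) t0) 0 _ _
  (derivable_pt_lim_minus _ _ _ _ _ HWd (Hphi0 Hx0)) Hdd.
suff Hle : forall s, Rabs (s - 0) < Rmin d d' ->
    W s - phi (line x0 v s) t0 <= W 0 - phi (line x0 v 0) t0.
  by move=> /(_ Hle); lra.
move=> s; rewrite Rminus_0_r => Hs; have [_ Hle] := Hline s ltac:(lra).
by rewrite !HW ?Rabs_R0 ?line0; lra.
Qed.

Lemma line_touching_second (W W' : R -> R) W'' v d : 0 < d ->
  (forall s, Rabs s < d -> W s = w (line x0 v s) t0) ->
  (forall s, Rabs s < d -> derivable_pt_lim W s (W' s)) ->
  derivable_pt_lim W' 0 W'' ->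
  sumI (fun j => v j * Dphi x0 t0 j) = W' 0 /\ W'' <= quad (D2phi x0 t0) v.
Proof.
move=> Hd HW HWd HW'd; have [d' [Hd' Hline]] := line_in_slice v.
have Hdd : 0 < Rmin d d' by apply: Rmin_pos.
have := Rmin_l d d'; have := Rmin_r d d' => H1 H2.
have := @local_max_sub_derivatives W W' (fun s => phi (line x0 v s) t0)
  (fun s => sumI (fun j => v j * Dphi (line x0 v s) t0 j)) _ _ _ Hdd
  (fun s Hs => HWd s ltac:(lra)) (fun s Hs => phi_line_at (proj1 (Hline s ltac:(lra))))
  HW'd (phi_line_second v).
rewrite line0 => -[] //.
move=> s Hs; have [_ Hle] := Hline s ltac:(lra).
by rewrite !HW ?Rabs_R0 ?line0; lra.
Qed.

Lemma time_touching (Wt : R -> R) l : (forall t, 0 < t -> Wt t = w x0 t) ->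
  derivable_pt_lim Wt t0 l -> phit x0 t0 = l.
Proof.
move=> HW HWd; have [_ [_ [Hphit _]]] := Hphi.
have [dm [Hdm Hm]] := Hmax; have [Hx [Ht HT]] := Hx0.
set d := Rmin dm (Rmin t0 (T - t0)).
have Hd : 0 < d by apply: Rmin_pos => //; apply: Rmin_pos; lra.
have := Rmin_l dm (Rmin t0 (T - t0)); have := Rmin_r dm (Rmin t0 (T - t0)).
have := Rmin_l t0 (T - t0); have := Rmin_r t0 (T - t0); rewrite -/d => H1 H2 H3 H4.
have := derivable_pt_lim_local_max (derivable_pt_lim_minus _ _ _ _ _ HWd (Hphit x0 t0 Hx0)) Hd.
suff : forall s, Rabs (s - t0) < d -> Wt s - phi x0 s <= Wt t0 - phi x0 t0.
  by move=> Hle /(_ Hle); lra.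
move=> s /Rabs_def2 Hs; rewrite !HW; try lra.
by apply: Hm; rewrite ?vdist_self; try split; try apply: Rabs_def1; lra.
Qed.

Let sqdist_x0_lt : sqdist x0 z < Rad * Rad.
Proof. by apply/vdist_lt_iff => //; case: Hx0. Qed.

Lemma line_conditions_off_center v ps2 : 0 < sqdist x0 z ->
  derivable_pt_lim (profile_smooth' k Rad) (sqdist x0 z) ps2 ->
  let c := mu * decay k mu Rad N t0 in
  let P1 := profile_smooth' k Rad (sqdist x0 z) in
  let B := dot (fun i => x0 i - z i) v in
  sumI (fun j => v j * Dphi x0 t0 j) = c * (P1 * (2 * B)) /\
  c * (ps2 * (2 * B) * (2 * B) + P1 * (2 * dot v v)) <= quad (D2phi x0 t0) v.
Proof.
move=> HA0 Hps2 c P1 B; set A := sqdist x0 z in HA0 Hps2 P1 *; set C := dot v v.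
have HAR : A < Rad * Rad := sqdist_x0_lt.
set Qs := fun s => A + 2 * s * B + s * s * C.
have HQs s : derivable_pt_lim Qs s (2 * B + 2 * s * C).
  by apply/is_derive_Reals; rewrite /Qs; auto_derive; [|ring].
have [d [Hd HQnear]] := continuity_pt_near (continuity_pt_of_derivable (HQs 0))
  (Rmin_pos _ _ HA0 (ltac:(lra) : 0 < Rad * Rad - A)).
have HQs0 : Qs 0 = A by rewrite /Qs; ring.
have Hrange s : Rabs s < d -> 0 < Qs s < Rad * Rad.
  move=> Hs; have /Rabs_def2 := HQnear s ltac:(rewrite Rminus_0_r; lra); rewrite HQs0.
  by have := Rmin_l A (Rad * Rad - A); have := Rmin_r A (Rad * Rad - A); lra.
have [] := line_touching_second (W := fun s => c * profile_smooth k Rad (Qs s))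
  (W' := fun s => c * (profile_smooth' k Rad (Qs s) * (2 * B + 2 * s * C)))
  (W'' := c * (ps2 * (2 * B) * (2 * B) + P1 * (2 * C))) (v := v) Hd.
- move=> s /Hrange [HQ1 HQ2]; rewrite wfun_eq; try lra.
  rewrite sqdist_line -/A -/B -/C -/(Qs s) profile_smooth_eq //; rewrite /c; ring.
- move=> s /Hrange [HQ1 HQ2].
  apply: (derivable_pt_lim_scal (fun s => profile_smooth k Rad (Qs s))).
  apply: (derivable_pt_lim_comp Qs (profile_smooth k Rad)) => //.
  exact: derivable_pt_lim_profile_smooth.
- apply: (derivable_pt_lim_scal (fun s => profile_smooth' k Rad (Qs s) * (2 * B + 2 * s * C))).
  have -> : ps2 * (2 * B) * (2 * B) + P1 * (2 * C)
    = ps2 * (2 * B + 2 * 0 * C) * (2 * B + 2 * 0 * C) + profile_smooth' k Rad (Qs 0) * (2 * C).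
    by rewrite HQs0 /P1; ring.
  apply: (derivable_pt_lim_mult (fun s => profile_smooth' k Rad (Qs s))).
    by apply: (derivable_pt_lim_comp Qs (profile_smooth' k Rad)); rewrite ?HQs0.
  by apply/is_derive_Reals; auto_derive; [|ring].
- by rewrite HQs0 -/P1 => -> Hle; split => //; ring.
Qed.

Lemma Dphi_center : x0 = z -> Dphi x0 t0 = fun _ => 0.
Proof.
move=> Hz; apply: functional_extensionality => i; set v := ecoord i.
rewrite -(dot_ecoord i (Dphi x0 t0)).
apply: (line_touching_first (W := fun s => mu * decay k mu Rad N t0 * profile k Rad (s * s))
  (d := 1)) => [|s _|]; first lra.
- rewrite wfun_eq; try lra.
  rewrite sqdist_line Hz sqdist_self /v dot_ecoord_r dot_ecoord /ecoord eqxx Rminus_diag.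
  by rewrite (_ : 0 + 2 * s * 0 + s * s * 1 = s * s); ring.
- rewrite -[X in derivable_pt_lim _ _ X](Rmult_0_r (mu * decay k mu Rad N t0)).
  apply: (derivable_pt_lim_scal (fun s => profile k Rad (s * s))).
  exact: derivable_pt_lim_profile_sq.
Qed.

Lemma visc_center : x0 = z -> H (Dphi x0 t0) (D2phi x0 t0) - phit x0 t0 >= 0.
Proof.
move=> Hz; have [_ [HBq _]] := HB.
have -> : Dphi x0 t0 = vscale 0 (Dphi x0 t0).
  by rewrite Dphi_center //; apply: functional_extensionality => i; rewrite /vscale; ring.
rewrite HBq ?Rabs_R0 ?rpow_nonpos; try lra; last exact: D2phi_symmetric.
have -> : phit x0 t0 = mu * decay' k mu Rad N t0.
  apply: (time_touching (Wt := fun t => mu * decay k mu Rad N t)) => [t Ht|].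
    by rewrite Hz wfun_center; lra.
  by apply: (derivable_pt_lim_scal (decay k mu Rad N)); apply: derivable_pt_lim_decay; lra.
by have := decay'_lt0 k_gt1 mu_gt0 Rad_gt0 N_lt0 (Rlt_le _ _ t0_gt0); nra.
Qed.

Let A := sqdist x0 z.
Let c := mu * decay k mu Rad N t0.
Let P1 := profile_smooth' k Rad A.
Let r := sqrt A.
Let e : Vec n := fun i => / r * (x0 i - z i).

Let c_gt0 : 0 < c.
Proof. by apply: Rmult_lt_0_compat => //; apply: exp_pos. Qed.

Let dot_e v : dot e v = / r * dot (fun i => x0 i - z i) v.
Proof. exact: dot_scal_l. Qed.

Lemma Dphi_off_center : 0 < A -> Dphi x0 t0 = vscale (2 * c * P1 * r) e.
Proof.
move=> HA0; have [ps2 Hps2] := ex_derivable_pt_lim_profile_smooth' k_gt1 Rad_gt0 HA0 sqdist_x0_lt.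
have Hr : 0 < r by apply: sqrt_lt_R0.
apply: functional_extensionality => i.
have [+ _] := line_conditions_off_center (ecoord i) HA0 Hps2.
rewrite -/(dot (ecoord i) (Dphi x0 t0)) dot_ecoord dot_ecoord_r -/A -/P1 -/c => ->.
by rewrite /vscale /e; field; lra.
Qed.

Lemma vnorm_e : 0 < A -> vnorm e = 1.
Proof.
move=> HA0; have Hr : 0 < r by apply: sqrt_lt_R0.
have Hrr : r * r = A by apply: sqrt_sqrt; lra.
rewrite /vnorm dot_e dot_sym dot_e -/(sqdist x0 z) -/A -Hrr.
by rewrite (_ : / r * (/ r * (r * r)) = 1) ?sqrt_1 //; field; lra.
Qed.

Lemma D2phi_ge_off_center : 0 < A -> exists lam,
  mle (mscale (-2 * c * P1) (madd (mscale lam (tens e)) (mscale (-1) (@Imat n))))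
      (D2phi x0 t0).
Proof.
move=> HA0; have [ps2 Hps2] := ex_derivable_pt_lim_profile_smooth' k_gt1 Rad_gt0 HA0 sqdist_x0_lt.
have HP1 : P1 < 0 := profile_smooth'_lt0 k_gt1 Rad_gt0 HA0 sqdist_x0_lt.
have Hr : 0 < r by apply: sqrt_lt_R0.
have Hrr : r * r = A by apply: sqrt_sqrt; lra.
exists (-2 * ps2 * A / P1) => v; rewrite quad_minus.
have [_ Hq] := line_conditions_off_center v HA0 Hps2.
rewrite quad_mscale quad_madd !quad_mscale quad_tens quad_Imat dot_e.
set b := dot (fun i => x0 i - z i) v in Hq *.
have -> : -2 * c * P1 * (-2 * ps2 * A / P1 * (/ r * b * (/ r * b)) + -1 * dot v v)
    = c * (ps2 * (2 * b) * (2 * b) + P1 * (2 * dot v v)).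
  by rewrite -Hrr; field; split; lra.
by rewrite /c /P1 /A; lra.
Qed.

Lemma visc_off_center : 0 < A -> H (Dphi x0 t0) (D2phi x0 t0) - phit x0 t0 >= 0.
Proof.
move=> HA0; have [_ [HBq HBX]] := HB; have HAR : A < Rad * Rad := sqdist_x0_lt.
have Hc := c_gt0.
have HP1 : P1 < 0 := profile_smooth'_lt0 k_gt1 Rad_gt0 HA0 HAR.
have Hr : 0 < r by apply: sqrt_lt_R0.
have [lam HD2] := D2phi_ge_off_center HA0.
set M := madd (mscale lam (tens e)) (mscale (-1) (@Imat n)) in HD2.
have HM : Defs.symmetric M.
  by apply: symmetric_madd; apply: symmetric_mscale; [apply: symmetric_tens | apply: symmetric_Imat].
have HHe : N <= H e M by apply: (proj1 HN); apply: vnorm_e.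
have Hmono : (-2 * c * P1) * H e M <= H e (D2phi x0 t0).
  rewrite -HBX //; last nra.
  by apply: (proj1 HA) => //; [apply: symmetric_mscale | apply: D2phi_symmetric].
have Hwt : phit x0 t0 = mu * profile_smooth k Rad A * decay' k mu Rad N t0.
  apply: (time_touching (Wt := fun t => mu * profile_smooth k Rad A * decay k mu Rad N t)).
    by move=> t Ht; rewrite wfun_eq -/A ?profile_smooth_eq //; lra.
  by apply: (derivable_pt_lim_scal (decay k mu Rad N)); apply: derivable_pt_lim_decay; lra.
have Hid := decay_profile_identity k_gt1 mu_gt0 Rad_gt0 N_lt0 HA0 HAR (Rlt_le _ _ t0_gt0).
cbv zeta in Hid; rewrite -/c -/P1 -/r (_ : k1 + 1 - 1 = k1) in Hid; last by ring.
have Hneg : 2 * c * P1 * r < 0 by have := Rmult_lt_0_compat _ _ Hc Hr; nra.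
rewrite Dphi_off_center // HBq; last exact: D2phi_symmetric.
rewrite Rabs_left // Hwt -Hid (_ : - (2 * c * P1 * r) = -2 * c * P1 * r); last by ring.
have : -2 * c * P1 * N <= H e (D2phi x0 t0) by nra.
by have := rpow_ge0 (-2 * c * P1 * r) k1; nra.
Qed.

End TestFunction.

Theorem mainTheorem10 (n : nat) (H : Vec n -> Mat n -> R) (k1 : R)
  (Hcont : H_continuous H) (HA : conditionA H) (HB : conditionB H k1)
  (HC : conditionC H) (Hk : 1 < k1 + 1)
  (N : R) (HN : is_N H N) (HNneg : N < 0)
  (mu Rad : R) (Hmu : 0 < mu) (HRad : 0 < Rad) (z : Vec n) :
  let k := k1 + 1 in
  let E := E_const k mu Rad N in
  let w := wfun k mu Rad N z in
  (forall x t, vdist x z <= Rad -> 0 <= t -> 0 <= w x t) /\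
  (forall x t, vdist x z = Rad -> 0 <= t -> w x t = 0) /\
  (forall t, 0 <= t -> w z t = mu * rpow (1 + t / E) (- (1 / (k - 1)))) /\
  (forall T, 0 < T ->
     visc_subsolution H w (fun x t => vdist x z < Rad /\ 0 < t /\ t < T)).
Proof.
move=> k E w; have Hk1 : 0 < k1 by lra.
split; [|split; [|split]].
- move=> x t _ Ht; rewrite /w wfun_eq //.
  apply: Rmult_le_pos; last exact/Rlt_le/exp_pos.
  by apply: Rmult_le_pos; [lra | apply: rpow_ge0].
- by move=> x t Hx Ht; rewrite /w wfun_eq // profile_boundary //; lra.
- by move=> t Ht; rewrite /w wfun_center // decay_rpow.
- move=> T HT; split; first exact: usc_wfun.
  move=> phi Dphi D2phi phit Hphi x0 t0 Hx0 Hmax.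
  case: (Rle_lt_or_eq_dec _ _ (sqdist_ge0 z x0)) => [Hoff|/esym/sqdist_eq0 Hcenter].
  + exact: (visc_off_center HA HB Hk1 HN HNneg Hmu HRad Hphi Hx0 Hmax Hoff).
  + exact: (visc_center HB Hk1 HNneg Hmu HRad Hphi Hx0 Hmax Hcenter).
Qed.
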